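(* Let $p_1,\ldots,p_m\in[0,1]$ and $\alpha\in[0,1]$, and let $q_\alpha$, $\hat\pi_\alpha$, $B_q$ be as in the context. For any $q\in[0,1]$ we have $\alpha\, q_\alpha(B_q)\le \hat\pi_\alpha q$, with equality if and only if $\hat\pi_\alpha q=0$ (equivalently $h_\alpha q=0$).
   Context: Setting: $m$ hypotheses with $p$-values $p_1,\ldots,p_m\in[0,1]$; $r_1,\ldots,r_m$ a permutation of $1,\ldots,m$ with $p_{r_1}\le\cdots\le p_{r_m}$, $p_{(i)}=p_{r_i}$, $L_i=\{r_1,\ldots,r_i\}$, $K_i=\{r_{m-i+1},\ldots,r_m\}$. For $I\subseteq\{1,\ldots,m\}$, $p_{(i:I)}$ is the $i$-th smallest of $\{p_j:j\in I\}$. Simes local test: $I\in\mathcal{U}_\alpha$ iff some $1\le i\le|I|$ has $|I|p_{(i:I)}\le i\alpha$. Closed testing: $\mathcal{X}_\alpha=\{I: J\in\mathcal{U}_\alpha\ \forall J\supseteq I\}$. $t_\alpha(S)=\max\{|I|:I\subseteq S, I\notin\mathcal{X}_\alpha\}$, and $q_\alpha(S)=t_\alpha(S)/|S|$ for $S\neq\emptyset$, $q_\alpha(\emptyset)=0$. $h_\alpha=\max\{0\le i\le m:K_i\notin\mathcal{U}_\alpha\}$, $\hat\pi_\alpha=h_\alpha/m$. For $q\in[0,1]$: $b_q=\max\{1\le i\le m: mp_{(i)}\le iq\}$ ($b_q=0$ if none), $B_q=L_{b_q}$ (the Benjamini–Hochberg rejection set at level $q$). *)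

(* Indices 1..m of the paper are 'I_m (0-based). *)
From HB Require Import structures.
From mathcomp Require Import all_boot all_order all_algebra all_fingroup.
Set Implicit Arguments. Unset Strict Implicit. Unset Printing Implicit Defensive.
Import Order.TTheory GRing.Theory Num.Theory.
Local Open Scope ring_scope.

Section Defs.
Variables (R : realFieldType) (m : nat) (p : 'I_m -> R) (r : {perm 'I_m}).

(* r lists the hypotheses by increasing p-value: p_(k+1) = p (r k) *)
Definition sorted_perm : Prop := forall i j : 'I_m, (i <= j)%N -> p (r i) <= p (r j).

Definition Lset (i : nat) : {set 'I_m} := [set r k | k : 'I_m & (k < i)%N].
Definition Kset (i : nat) : {set 'I_m} := [set r k | k : 'I_m & (m - i <= k)%N].

Definition psorted (I : {set 'I_m}) : seq R := sort <=%R [seq p j | j <- enum I].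
Definition pI (I : {set 'I_m}) (i : nat) : R := nth 0 (psorted I) i.-1.

Definition inU (alpha : R) (I : {set 'I_m}) : bool :=
  [exists i : 'I_#|I|, #|I|%:R * pI I i.+1 <= i.+1%:R * alpha].

Definition inX (alpha : R) (I : {set 'I_m}) : bool :=
  [forall J : {set 'I_m}, (I \subset J) ==> inU alpha J].

Definition t_alpha (alpha : R) (S : {set 'I_m}) : nat :=
  \max_(I : {set 'I_m} | (I \subset S) && ~~ inX alpha I) #|I|.

Definition q_alpha (alpha : R) (S : {set 'I_m}) : R :=
  if S == set0 then 0 else (t_alpha alpha S)%:R / #|S|%:R.

Definition h_alpha (alpha : R) : nat :=
  \max_(i < m.+1 | ~~ inU alpha (Kset i)) (i : nat).

Definition pihat (alpha : R) : R := (h_alpha alpha)%:R / m%:R.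

Definition b_q (q : R) : nat :=
  \max_(k : 'I_m | m%:R * p (r k) <= k.+1%:R * q) k.+1.

Definition B_q (q : R) : {set 'I_m} := Lset (b_q q).
End Defs.

From HB Require Import structures.
From mathcomp Require Import all_boot all_order all_algebra all_fingroup.
From mathcomp Require Import zify ring.
Set Implicit Arguments. Unset Strict Implicit. Unset Printing Implicit Defensive.
Import Order.TTheory GRing.Theory Num.Theory.
Local Open Scope ring_scope.

(* Every p-value in B_q is at most c = b_q q / m.  If t = t_alpha(B_q) > 0,
   some I included in B_q with |I| = t is not rejected by closed testing, so
   some J containing I fails the Simes test; at rank t this failure reads
   t alpha < |J| p_(t:J) <= |J| c.  The set K_|J| of the |J| largest p-values
   has, at every threshold, at most as many p-values below it as J, so it
   fails the Simes test too and |J| <= h_alpha.  Hence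
   alpha t / b_q < h_alpha c / b_q = pihat_alpha q. *)

Lemma nth_sort_gt {d} {T : orderType d} (x0 c : T) (s : seq T) k :
  (k < size s)%N ->
  (c < nth x0 (sort <=%O s) k)%O = (count (<= c)%O s <= k)%N.
Proof.
rewrite -(size_sort <=%O) -(count_sort <=%O).
have st : sorted <=%O (sort <=%O s) := sort_sorted le_total s.
move: (sort _ s) st => t st kt; set n := count _ t.
case: (ltnP k n) => kn.
- have : nth x0 t k \in [seq y <- t | (y <= c)%O].
    by rewrite sorted_filter_le // -(nth_take x0 kn) mem_nth // size_take_min leq_min kn.
  by rewrite mem_filter ltNge => /andP [-> _].
- have : nth x0 t k \in [seq y <- t | (c < y)%O].
    rewrite sorted_filter_gt // -(subnKC kn) -nth_drop mem_nth // size_drop.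
    by rewrite ltn_sub2r // (leq_ltn_trans kn).
  by rewrite mem_filter => /andP [-> _].
Qed.

Lemma bigmax_gt0_cond (I : finType) (P : pred I) (F : I -> nat) :
  (0 < \max_(i | P i) F i)%N -> exists2 i, P i & \max_(i | P i) F i = F i.
Proof.
case: (pickP P) => [i0 Pi0 | P0]; last by rewrite big_pred0.
have /(eq_bigmax_cond F) [i Pi ->] : (0 < #|P|)%N by apply/card_gt0P; exists i0.
by exists i.
Qed.

Lemma card_ord_ltn m i : (i <= m)%N -> #|[set k : 'I_m | (k < i)%N]| = i.
Proof. by move=> im; rewrite cardsE -sum1_card (big_ord_narrow im) sum1_card card_ord. Qed.

Section ClosedSimes.
Variables (R : realFieldType) (m : nat) (p : 'I_m -> R) (r : {perm 'I_m}).
Implicit Types (S I J : {set 'I_m}) (c : R).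

Definition count_le (S : {set 'I_m}) (c : R) : nat := #|S :&: [set y | p y <= c]|.

Lemma count_le_homo S : {homo count_le S : c c' / c <= c' >-> (c <= c')%N}.
Proof.
move=> c c' cc'; apply/subset_leq_card/setIS/subsetP => y.
by rewrite !inE => /le_trans; apply.
Qed.

Lemma pI_gt S k c : (k < #|S|)%N -> (c < pI p S k.+1) = (count_le S c <= k)%N.
Proof.
move=> kS; rewrite /pI /psorted nth_sort_gt ?size_map -?cardE //.
rewrite count_map /count_le cardE /enum_mem size_filter count_filter.
by congr (_ <= _)%N; apply: eq_count => y; rewrite !inE andbC.
Qed.

Lemma inUPn alpha S :
  reflect (forall k, (k < #|S|)%N -> (count_le S (k.+1%:R * alpha / #|S|%:R) <= k)%N)
          (~~ inU p alpha S).
Proof.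
have simes k : (k < #|S|)%N ->
    (#|S|%:R * pI p S k.+1 <= k.+1%:R * alpha) = ~~ (count_le S (k.+1%:R * alpha / #|S|%:R) <= k)%N.
  move=> kS; have S0 : (0 : R) < #|S|%:R by rewrite ltr0n (leq_ltn_trans _ kS).
  by rewrite -pI_gt // -leNgt ler_pdivlMr // mulrC.
apply: (iffP existsPn) => [H k kS | H k]; first by have := H (Ordinal kS); rewrite simes ?negbK.
by rewrite simes ?negbK ?H.
Qed.

Lemma card_Lset j : (j <= m)%N -> #|Lset r j| = j.
Proof. by move=> jm; rewrite card_imset ?card_ord_ltn //; exact: perm_inj. Qed.

Lemma card_Kset j : (j <= m)%N -> #|Kset r j| = j.
Proof.
move=> jm; rewrite card_imset; last exact: perm_inj.
have -> : [set k : 'I_m | (m - j <= k)%N] = ~: [set k : 'I_m | (k < m - j)%N].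
  by apply/setP => k; rewrite !inE leqNgt.
by rewrite cardsCs setCK card_ord card_ord_ltn ?leq_subr ?subKn.
Qed.

Lemma card_le_m S : (#|S| <= m)%N.
Proof. by rewrite -[X in (_ <= X)%N]card_ord max_card. Qed.

Hypothesis sorted_r : sorted_perm p r.

Lemma Kset_compl_le j y x : y \notin Kset r j -> x \in Kset r j -> p y <= p x.
Proof.
move=> yK /imsetP [i]; rewrite inE => iK ->.
rewrite -[y](permKV r); apply/sorted_r/(leq_trans (ltnW _) iK).
rewrite ltnNge; apply: contra yK => yK.
by apply/imsetP; exists (r^-1 y)%g; rewrite ?inE ?permKV.
Qed.

Lemma count_le_Kset J c : (count_le (Kset r #|J|) c <= count_le J c)%N.
Proof.
set K := Kset r #|J|; set A := [set y | p y <= c].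
have [KA0 | [x]] := set_0Vmem (K :&: A); first by rewrite /count_le -/A KA0 cards0.
rewrite inE => /andP [xK xA].
have AK : A :\: K = ~: K.
  rewrite setDE; apply/setIidPr/subsetP => y; rewrite !inE => yK.
  by rewrite inE in xA; apply: le_trans xA; apply: Kset_compl_le yK xK.
have AJ : (#|A :\: J| <= #|~: J|)%N by rewrite subset_leq_card // setDE subsetIr.
have KJ : #|~: K| = #|~: J|.
  by apply/eqP; rewrite -(eqn_add2l #|J|) -{1}(card_Kset (card_le_m J)) !cardsC.
have := cardsID K A; have := cardsID J A; rewrite AK KJ => eJ eK.
by rewrite /count_le -/A (setIC K) (setIC J) -(leq_add2r #|~: J|) eK -eJ leq_add2l.
Qed.

Lemma notinU_Kset alpha J : ~~ inU p alpha J -> ~~ inU p alpha (Kset r #|J|).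
Proof.
move/inUPn => nUJ; apply/inUPn => k; rewrite card_Kset ?card_le_m // => kJ.
exact: leq_trans (count_le_Kset _ _) (nUJ k kJ).
Qed.

Lemma card_le_h_alpha alpha J : ~~ inU p alpha J -> (#|J| <= h_alpha p r alpha)%N.
Proof.
move=> nUJ; have Jm : (#|J| < m.+1)%N by rewrite ltnS card_le_m.
exact: (leq_bigmax_cond (F := fun i : 'I_m.+1 => nat_of_ord i) (Ordinal Jm) (notinU_Kset nUJ)).
Qed.

Lemma t_alpha_lt alpha S c : 0 <= c -> {in S, forall y, p y <= c} ->
  (0 < t_alpha p alpha S)%N -> (t_alpha p alpha S)%:R * alpha < (h_alpha p r alpha)%:R * c.
Proof.
move=> c0 Sc t_gt0; have [I /andP [IS]] := bigmax_gt0_cond t_gt0.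
rewrite /inX negb_forall => /existsP [J]; rewrite negb_imply => /andP [IJ nUJ] tE.
rewrite /t_alpha tE; rewrite /t_alpha tE in t_gt0.
have IJ_c : (#|I| <= count_le J c)%N.
  apply/subset_leq_card/subsetP => y yI.
  by rewrite !inE (subsetP IJ) // Sc // (subsetP IS).
have J_gt0 : (0 < #|J|)%N := leq_trans t_gt0 (subset_leq_card IJ).
have J_I : (count_le J (#|I|%:R * alpha / #|J|%:R) < #|I|)%N.
  have /inUPn/(_ #|I|.-1) := nUJ; rewrite prednK // => /(_ (subset_leq_card IJ)).
  by rewrite -ltnS prednK.
have : #|I|%:R * alpha / #|J|%:R < c.
  by rewrite ltNge; apply: contraL J_I => /(count_le_homo J) le; rewrite -leqNgt (leq_trans IJ_c).
rewrite ltr_pdivrMr ?ltr0n // mulrC => /lt_le_trans; apply.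
by rewrite mulrC ler_wpM2r // ler_nat card_le_h_alpha.
Qed.

Lemma b_q_le_m q : (b_q p r q <= m)%N.
Proof. by apply/bigmax_leqP => k _; apply: ltn_ord. Qed.

Lemma B_q_pval_le q y : y \in B_q p r q -> m%:R * p y <= (b_q p r q)%:R * q.
Proof.
case/imsetP => k; rewrite inE => kb ->.
have [i iB bE] := bigmax_gt0_cond (leq_ltn_trans (leq0n k) kb).
rewrite -/(b_q p r q) in bE; rewrite bE; apply: le_trans iB.
by rewrite ler_wpM2l // sorted_r // -ltnS -bE.
Qed.

Lemma alpha_q_alpha_B_q_lt alpha q : 0 <= q ->
  0 < alpha * q_alpha p alpha (B_q p r q) ->
  alpha * q_alpha p alpha (B_q p r q) < pihat p r alpha * q.
Proof.
move=> q0; have Bc := B_q_pval_le (q := q); have b_le_m := b_q_le_m q.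
rewrite /q_alpha /B_q card_Lset // in Bc *; set b := b_q p r q in Bc b_le_m *.
case: eqP => [_ | /eqP B_neq0]; first by rewrite mulr0 ltxx.
set t := t_alpha p alpha _; have [-> | t_gt0 _] := posnP t; first by rewrite mul0r mulr0 ltxx.
have b_gt0 : (0 < b)%N by rewrite -(card_Lset b_le_m) card_gt0.
have m_gt0 : (0 < m)%N := leq_trans b_gt0 b_le_m.
set c := b%:R * q / m%:R.
have c0 : 0 <= c by rewrite divr_ge0 ?mulr_ge0.
have B_le_c : {in Lset r b, forall y, p y <= c}.
  by move=> y /Bc; rewrite ler_pdivlMr ?ltr0n // mulrC.
have := t_alpha_lt c0 B_le_c t_gt0; rewrite -/t => lt_hc.
rewrite /pihat mulrA ltr_pdivrMr ?ltr0n // mulrC.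
suff -> : (h_alpha p r alpha)%:R / m%:R * q * b%:R = (h_alpha p r alpha)%:R * c by [].
by rewrite /c; field; rewrite pnatr_eq0 -lt0n.
Qed.

Lemma q_alpha_ge0 alpha S : 0 <= q_alpha p alpha S.
Proof. by rewrite /q_alpha; case: ifP => // _; rewrite divr_ge0. Qed.

Lemma h_alpha_le_m alpha : (h_alpha p r alpha <= m)%N.
Proof. by apply/bigmax_leqP => i _; rewrite -ltnS. Qed.

Lemma pihat_mul_eq0 alpha q :
  pihat p r alpha * q = 0 <-> (h_alpha p r alpha)%:R * q = 0.
Proof.
rewrite /pihat mulrAC; have [m0 | m_gt0] := posnP m.
  have -> : h_alpha p r alpha = 0%N by have := h_alpha_le_m alpha; lia.
  by rewrite !mul0r.
split=> [/eqP | ->]; last by rewrite mul0r.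
by rewrite mulf_eq0 invr_eq0 pnatr_eq0 eqn0Ngt m_gt0 orbF => /eqP.
Qed.
End ClosedSimes.

Lemma le_and_eq_iff_eq0 (R : numDomainType) (x y : R) :
  0 <= x -> 0 <= y -> (0 < x -> x < y) -> x <= y /\ (x = y <-> y = 0).
Proof.
move=> x0 y0 xy; have [-> | x_neq0] := eqVneq x 0; first by split=> //; split=> <-.
have {}xy : x < y by rewrite xy // lt0r x_neq0.
split; [exact: ltW | split=> [x_eq_y | y_eq0]]; first by rewrite x_eq_y ltxx in xy.
by move: (le_lt_trans x0 xy); rewrite y_eq0 ltxx.
Qed.

Theorem lemma5 (R : realFieldType) (m : nat) (p : 'I_m -> R) (r : {perm 'I_m})
  (alpha q : R) :
  (forall j, 0 <= p j <= 1) ->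
  sorted_perm p r ->
  0 <= alpha <= 1 ->
  0 <= q <= 1 ->
  alpha * q_alpha p alpha (B_q p r q) <= pihat p r alpha * q /\
  (alpha * q_alpha p alpha (B_q p r q) = pihat p r alpha * q <-> pihat p r alpha * q = 0) /\
  (pihat p r alpha * q = 0 <-> (h_alpha p r alpha)%:R * q = 0).
Proof.
move=> _ sorted_r /andP [alpha0 _] /andP [q0 _].
have [le eq] := le_and_eq_iff_eq0 (mulr_ge0 alpha0 (q_alpha_ge0 _ _ _))
  (mulr_ge0 (divr_ge0 (ler0n _ _) (ler0n _ _)) q0) (alpha_q_alpha_B_q_lt sorted_r q0).
by split; [|split; [|exact: pihat_mul_eq0]].
Qed.
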